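(* For any $\epsilon>0$ there exists a family $\mathcal C$ of tree-structured Ising models with $n$ leaves labeled $1,\dots,n$, with $\log|\mathcal C|\le O(n\log(n/\epsilon))$, such that for any tree-structured Ising model with leaves $1,\dots,n$ there exists a model in $\mathcal C$ whose leaf distribution is within total variation distance $\epsilon$ of the leaf distribution of the given model.
   Context: A tree-structured Ising model is given by a tree $T=(V,E)$ whose leaves are labeled $1,\dots,n$ (standing assumption: every non-leaf node has degree $3$) with edge weights $\theta_e\in[-1,1]$; spins $x_v\in\{-1,1\}$ at all nodes have probability $\propto\prod_{(u,v)\in E}\frac{1+\theta_{uv}x_ux_v}{2}$, and the leaf distribution is the marginal on the leaf spins. Total variation distance is $\frac12\sum_x|\mu(x)-\nu(x)|$. *)

From HB Require Import structures.
From mathcomp Require Import all_boot all_order all_algebra.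
From mathcomp Require Import all_classical all_reals exp.
Set Implicit Arguments. Unset Strict Implicit. Unset Printing Implicit Defensive.
Import Order.TTheory GRing.Theory Num.Theory.
Local Open Scope ring_scope.

Definition deg (m : nat) (e : rel 'I_m) (v : 'I_m) : nat := #|[set w | e v w]|.

Definition nedges (m : nat) (e : rel 'I_m) : nat :=
  #|[set p : 'I_m * 'I_m | (p.1 < p.2)%N && e p.1 p.2]|.

Definition is_tree (m : nat) (e : rel 'I_m) : Prop :=
  [/\ (0 < m)%N, symmetric e, irreflexive e,
      (forall u v, connect e u v) & nedges e = m.-1].

(* A tree-structured Ising model with leaves labelled 0..n-1 (paper: 1..n). *)
Record tree_ising (R : realType) (n : nat) := TreeIsing {
  nv : nat;
  nle : (n <= nv)%N;
  adj : rel 'I_nv;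
  theta : 'I_nv -> 'I_nv -> R;
  adj_tree : is_tree adj;
  leaves_ok : forall v : 'I_nv, (v < n)%N -> (deg adj v <= 1)%N;
  internal_ok : forall v : 'I_nv, (n <= v)%N -> deg adj v = 3%N;
  theta_sym : forall u v, theta u v = theta v u;
  theta_range : forall u v, adj u v -> -1 <= theta u v <= 1
}.

Definition spin (R : realType) (b : bool) : R := if b then 1 else -1.

Section Model.
Variables (R : realType) (n : nat) (M : tree_ising R n).

Definition config_weight (s : {ffun 'I_(nv M) -> bool}) : R :=
  \prod_(u : 'I_(nv M)) \prod_(v : 'I_(nv M) | (u < v)%N && @adj R n M u v)
     ((1 + @theta R n M u v * spin R (s u) * spin R (s v)) / 2).

Definition leaf_vertex (i : 'I_n) : 'I_(nv M) := widen_ord (@nle R n M) i.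

Definition leaf_dist (x : {ffun 'I_n -> bool}) : R :=
  (\sum_(s : {ffun 'I_(nv M) -> bool} | [forall i, s (leaf_vertex i) == x i])
      config_weight s)
  / (\sum_(s : {ffun 'I_(nv M) -> bool}) config_weight s).
End Model.

Definition tv_dist (R : realType) (n : nat) (mu nu : {ffun 'I_n -> bool} -> R) : R :=
  2^-1 * \sum_(x : {ffun 'I_n -> bool}) `|mu x - nu x|.

From HB Require Import structures.
From mathcomp Require Import all_boot all_order all_algebra.
From mathcomp Require Import boolp reals exp.
From mathcomp Require Import ring lra zify.
Set Implicit Arguments. Unset Strict Implicit. Unset Printing Implicit Defensive.
Import Order.TTheory GRing.Theory Num.Theory.
Local Open Scope ring_scope.

(* Root the tree at vertex 0.  Recording the root spin and, for every other vertex, whether it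
   agrees with its parent is a bijection on spin configurations, and it turns the Ising weight
   into a product of independent coins, the coin of [v] having bias given by the weight of the
   edge from [v] to its parent.  By the hybrid argument the total variation distance between two
   product measures is at most the sum of the coordinatewise distances, and marginalising to
   the leaves does not increase it; so moving every edge weight by at most [2/N] moves the leaf
   distribution by at most [#vertices / N].  A tree whose internal vertices have degree 3 has at
   most [3n - 2] vertices, so rounding the weights to a grid of [N + 1 ~ 3n/eps] points yields a
   model within [eps], determined by its vertex count, parent map and grid indices: there are
   [(3n+1)^(3n+2) (N+1)^(3n+1)] such codes, whose logarithm is [O(n log (n/eps))]. *)

(** * Total variation of product measures *)

Section ProductMeasure.
Variables (R : realType) (T : finType) (m : nat) (a b : 'I_m -> T -> R).
Hypotheses (a_ge0 : forall v x, 0 <= a v x) (b_ge0 : forall v x, 0 <= b v x).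
Hypotheses (a_sum1 : forall v, \sum_x a v x = 1) (b_sum1 : forall v, \sum_x b v x = 1).

Definition hybrid (k : nat) (t : {ffun 'I_m -> T}) : R :=
  \prod_(v : 'I_m) (if (v < k)%N then b v (t v) else a v (t v)).

Lemma hybridB (k : 'I_m) t : hybrid k t - hybrid k.+1 t =
  (a k (t k) - b k (t k)) *
  \prod_(v | v != k) (if (v < k)%N then b v (t v) else a v (t v)).
Proof.
rewrite /hybrid [X in X - _](bigD1 k) //= [X in _ - X](bigD1 k) //= ltnn ltnSn mulrBl.
congr (_ * _ - _ * _); apply: eq_bigr => v /negbTE vk.
by rewrite ltnS leq_eqVlt val_eqE vk.
Qed.

Lemma sum_norm_hybridB (k : 'I_m) :
  \sum_t `|hybrid k t - hybrid k.+1 t| = \sum_x `|a k x - b k x|.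
Proof.
pose d (v : 'I_m) (x : T) : R :=
  if v == k then `|a k x - b k x| else if (v < k)%N then b v x else a v x.
transitivity (\sum_(t : {ffun 'I_m -> T}) \prod_v d v (t v)).
  apply: eq_bigr => t _; rewrite hybridB normrM [RHS](bigD1 k) //= /d eqxx.
  congr (_ * _); rewrite ger0_norm; last by apply: prodr_ge0 => v _; case: ifP.
  by apply: eq_bigr => v vk; rewrite (negbTE vk).
rewrite -bigA_distr_bigA (bigD1 k) //= [X in _ * X]big1 ?mulr1; last first.
  move=> v vk; rewrite (eq_bigr (fun x => if (v < k)%N then b v x else a v x)).
    by case: (v < k)%N.
  by move=> x _; rewrite /d (negbTE vk).
by apply: eq_bigr => x _; rewrite /d eqxx.
Qed.

Lemma sum_normB_prod_le :
  \sum_(t : {ffun 'I_m -> T}) `|\prod_v a v (t v) - \prod_v b v (t v)|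
    <= \sum_v \sum_x `|a v x - b v x|.
Proof.
have telescope (t : {ffun 'I_m -> T}) : \prod_v b v (t v) - \prod_v a v (t v)
    = \sum_(k < m) (hybrid k.+1 t - hybrid k t).
  rewrite -(big_mkord xpredT (fun k => hybrid k.+1 t - hybrid k t)) telescope_sumr //.
  by congr (_ - _); apply: eq_bigr => v _; rewrite ?ltn_ord.
apply: (@le_trans _ _ (\sum_t \sum_(k < m) `|hybrid k.+1 t - hybrid k t|)).
  by apply: ler_sum => t _; rewrite distrC telescope ler_norm_sum.
rewrite exchange_big; apply: ler_sum => k _; rewrite -sum_norm_hybridB.
by apply: ler_sum => t _; rewrite distrC.
Qed.
End ProductMeasure.

Lemma sum_norm_marginal_le (R : realType) (S X : finType) (f : S -> X) (g : S -> R) :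
  \sum_x `|\sum_(s | f s == x) g s| <= \sum_s `|g s|.
Proof.
rewrite (partition_big f xpredT) //=.
by apply: ler_sum => x _; apply: ler_norm_sum.
Qed.

Lemma eq_ffun_forall (I T : finType) (g : I -> T) (f : {ffun I -> T}) :
  [forall i, g i == f i] = ([ffun i => g i] == f).
Proof.
by apply/eqfunP/eqP => [eq_gf | <- i]; [apply/ffunP => i; rewrite ffunE | rewrite ffunE].
Qed.

(** * Parent-map form of a tree model *)

Lemma spinM (R : realType) (x y : bool) : spin R x * spin R y = spin R (x == y).
Proof. by case: x; case: y; rewrite /spin /=; lra. Qed.

(* Vertex [0] is the root and [p v] is the parent of [v != 0]; the value [p 0] is irrelevant. *)
Definition rooted (m : nat) (p : 'I_m -> 'I_m) :=
  exists h : 'I_m -> nat, forall v, val v != 0%N -> (h (p v) < h v)%N.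

Definition agreement (m : nat) (p : 'I_m -> 'I_m) (s : {ffun 'I_m -> bool}) :=
  [ffun v => if val v == 0%N then s v else s v == s (p v)].

Lemma agreement_inj m (p : 'I_m -> 'I_m) : rooted p -> injective (agreement p).
Proof.
move=> [h hp] s1 s2 eq12.
suff eq_below k v : (h v < k)%N -> s1 v = s2 v.
  by apply/ffunP => v; apply: (eq_below (h v).+1).
elim: k v => // k IHk v hv.
have := congr1 (fun s : {ffun _} => s v) eq12; rewrite /= !ffunE.
case: eqP => [//|/eqP v0]; rewrite (IHk (p v)) ?(leq_trans (hp v v0)) //.
by case: (s1 v); case: (s2 v); case: (s2 (p v)).
Qed.

Section ParentForm.
Variables (R : realType) (n m : nat) (p : 'I_m -> 'I_m).

Definition edge_factor (th : R) (x y : bool) : R := (1 + th * spin R x * spin R y) / 2.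

Definition parent_weight (th : 'I_m -> R) (s : {ffun 'I_m -> bool}) : R :=
  \prod_(v : 'I_m | val v != 0%N) edge_factor (th v) (s v) (s (p v)).

(* The normalising constant is [2], see [sum_parent_weight]. *)
Definition parent_leaf_dist (th : 'I_m -> R) (lf : 'I_n -> 'I_m)
    (x : {ffun 'I_n -> bool}) : R :=
  (\sum_(s : {ffun 'I_m -> bool} | [forall i, s (lf i) == x i]) parent_weight th s) / 2.

Definition agree_prob (th : 'I_m -> R) (v : 'I_m) (x : bool) : R :=
  if val v == 0%N then 2^-1 else (1 + th v * spin R x) / 2.

Lemma sum_agree_prob th v : \sum_x agree_prob th v x = 1.
Proof. by rewrite big_bool /= /agree_prob /spin; case: ifP => _; lra. Qed.

Lemma agree_prob_ge0 th v x :
  (val v != 0%N -> -1 <= th v <= 1) -> 0 <= agree_prob th v x.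
Proof.
rewrite /agree_prob; case: eqP => [_ _|_ /(_ isT) /andP[th_ge th_le]].
  by rewrite invr_ge0 ler0n.
by case: x; rewrite /spin; lra.
Qed.

Lemma sum_agree_prob_distB th1 th2 v :
  \sum_x `|agree_prob th1 v x - agree_prob th2 v x|
    = if val v == 0%N then 0 else `|th1 v - th2 v|.
Proof.
rewrite big_bool /= /agree_prob; case: ifP => _; first by rewrite subrr normr0 addr0.
rewrite /spin !mulr1 !mulrN1.
have -> : (1 + th1 v) / 2 - (1 + th2 v) / 2 = (th1 v - th2 v) / 2 by ring.
have -> : (1 - th1 v) / 2 - (1 - th2 v) / 2 = - ((th1 v - th2 v) / 2) by ring.
by rewrite normrN normrM [`|2^-1|]ger0_norm ?invr_ge0 ?ler0n //; lra.
Qed.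

Hypotheses (m_gt0 : (0 < m)%N) (p_rooted : rooted p).

Lemma parent_weightE th s :
  parent_weight th s = 2 * \prod_v agree_prob th v (agreement p s v).
Proof.
rewrite (bigD1 (Ordinal m_gt0)) //= /agree_prob eqxx mulrA mulfV ?mul1r ?pnatr_eq0 //.
apply: eq_big => [v | v v0]; first by rewrite -val_eqE.
by rewrite ffunE (negbTE v0) /edge_factor -mulrA spinM.
Qed.

Lemma sum_agreement (F : {ffun 'I_m -> bool} -> R) :
  \sum_s F (agreement p s) = \sum_t F t.
Proof. by rewrite [RHS](reindex_inj (agreement_inj p_rooted)). Qed.

Lemma sum_parent_weight th : \sum_s parent_weight th s = 2.
Proof.
under eq_bigr do rewrite parent_weightE.
rewrite -mulr_sumr (sum_agreement (fun t => \prod_v agree_prob th v (t v))).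
by rewrite -bigA_distr_bigA big1 ?mulr1 // => v _; apply: sum_agree_prob.
Qed.

Lemma tv_parent_leaf_dist_le th1 th2 lf :
  (forall v, val v != 0%N -> -1 <= th1 v <= 1) ->
  (forall v, val v != 0%N -> -1 <= th2 v <= 1) ->
  tv_dist (parent_leaf_dist th1 lf) (parent_leaf_dist th2 lf)
    <= 2^-1 * \sum_(v | val v != 0%N) `|th1 v - th2 v|.
Proof.
move=> th1_range th2_range; rewrite /tv_dist ler_wpM2l ?invr_ge0 ?ler0n //.
have marginalB x : parent_leaf_dist th1 lf x - parent_leaf_dist th2 lf x =
    2^-1 * \sum_(s : {ffun 'I_m -> bool} | [ffun i => s (lf i)] == x)
             (parent_weight th1 s - parent_weight th2 s).
  rewrite /parent_leaf_dist -mulrBl -sumrB mulrC.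
  by congr (_ * _); apply: eq_bigl => s; apply: eq_ffun_forall.
under eq_bigr do rewrite marginalB normrM ger0_norm ?invr_ge0 ?ler0n //.
rewrite -mulr_sumr; apply: (le_trans (ler_wpM2l _ (sum_norm_marginal_le _ _))).
  by rewrite invr_ge0 ler0n.
under eq_bigr do rewrite !parent_weightE -mulrBr normrM.
rewrite -mulr_sumr mulrA ger0_norm ?ler0n // mulVf ?pnatr_eq0 // mul1r.
rewrite (sum_agreement (fun t =>
  `|\prod_v agree_prob th1 v (t v) - \prod_v agree_prob th2 v (t v)|)).
apply: le_trans (sum_normB_prod_le _ _ _ _) _.
- by move=> v x; apply: agree_prob_ge0; apply: th1_range.
- by move=> v x; apply: agree_prob_ge0; apply: th2_range.
- exact: sum_agree_prob.
- exact: sum_agree_prob.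
under eq_bigr do rewrite sum_agree_prob_distB.
by rewrite [X in _ <= X]big_mkcond; apply: ler_sum => v _; case: eqP.
Qed.
End ParentForm.

(** * Trees *)

Section Trees.
Variables (m : nat) (e : rel 'I_m).

Definition edge_set : {set 'I_m * 'I_m} :=
  [set pr : 'I_m * 'I_m | (pr.1 < pr.2)%N && e pr.1 pr.2].

Definition nonroot : {set 'I_m} := [set v | val v != 0%N].

Definition parent_edges (p : 'I_m -> 'I_m) :=
  forall u v, e u v = ((val u != 0%N) && (p u == v)) || ((val v != 0%N) && (p v == u)).

Definition edge_of (p : 'I_m -> 'I_m) (v : 'I_m) : 'I_m * 'I_m :=
  if (v < p v)%N then (v, p v) else (p v, v).

Lemma sum_deg : symmetric e -> irreflexive e ->
  (\sum_u deg e u)%N = (2 * nedges e)%N.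
Proof.
move=> e_sym e_irr.
pose swap (pr : 'I_m * 'I_m) := (pr.2, pr.1).
have swapK : involutive swap by case.
have arcs : [set pr | e pr.1 pr.2] = edge_set :|: swap @^-1: edge_set.
  apply/setP => -[u v]; rewrite !inE /= [e v u]e_sym.
  by case: ltngtP => [| |/val_inj->]; rewrite ?e_irr ?orbF.
have disj : edge_set :&: swap @^-1: edge_set = set0.
  by apply/setP => -[u v]; rewrite !inE /=; case: ltngtP; rewrite ?andbF.
transitivity #|[set pr : 'I_m * 'I_m | e pr.1 pr.2]|.
  rewrite -sum1_card (eq_bigl (fun pr => xpredT pr.1 && e pr.1 pr.2)) => [|pr];
    last by rewrite inE.
  rewrite -(pair_big_dep xpredT e (fun _ _ => 1%N)) /=.
  by apply: eq_bigr => u _; rewrite /deg -sum1_card; apply: eq_bigl => w; rewrite inE.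
rewrite arcs cardsU disj cards0 subn0 card_preimset ?addnn ?mul2n //.
exact: inv_inj.
Qed.

Section ParentMap.
Variable p : 'I_m -> 'I_m.
Hypothesis p_rooted : rooted p.

Lemma rooted_neq v : val v != 0%N -> p v != v.
Proof. by case: p_rooted => h hp /hp; apply: contraTneq => ->; rewrite ltnn. Qed.

Lemma edge_of_inj : {in nonroot &, injective (edge_of p)}.
Proof.
case: p_rooted => h hp v w; rewrite !inE => /hp hv /hp hw; rewrite /edge_of.
case: ifP => _; case: ifP => _ [eq1 eq2] //.
  by subst v; move: hv; rewrite eq2; lia.
by subst w; move: hw; rewrite -eq2; lia.
Qed.

Lemma edge_of_in_edge_set v : symmetric e -> e v (p v) -> v \in nonroot ->
  edge_of p v \in edge_set.
Proof.
move=> e_sym evp; rewrite !inE /edge_of => /rooted_neq pv_neq.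
case: ifP => [lt | ge] /=; first by rewrite lt evp.
have gt : (p v < v)%N by rewrite ltn_neqAle val_eqE pv_neq leqNgt ge.
by rewrite gt e_sym.
Qed.

Lemma edge_set_parent : parent_edges p -> edge_set = edge_of p @: nonroot.
Proof.
move=> pe; have e_sym : symmetric e by move=> u v; rewrite !pe orbC.
apply/setP => -[u v]; apply/idP/imsetP => [|[w w_nonroot ->]].
  rewrite inE /= pe => /andP[uv /orP[/andP[u0 /eqP puv]|/andP[v0 /eqP pvu]]].
    by exists u; rewrite ?inE // /edge_of puv uv.
  by exists v; rewrite ?inE // /edge_of pvu ltnNge (ltnW uv).
apply: edge_of_in_edge_set => //; rewrite pe.
by move: w_nonroot; rewrite inE => ->; rewrite eqxx.
Qed.
End ParentMap.

Hypothesis e_tree : is_tree e.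

Lemma tree_descent : exists p, rooted p /\ forall v, val v != 0%N -> e v (p v).
Proof.
case: e_tree => m_gt0 _ _ e_conn _; pose r := Ordinal m_gt0.
have nonrootE v : (val v != 0%N) = (v != r) by rewrite -val_eqE.
pose reach v k := [exists t : k.-tuple 'I_m, path e v t && (last v t == r)].
have reach_ex v : exists k, reach v k.
  have /connectP[t t_path t_last] := e_conn v r.
  by exists (size t); apply/existsP; exists (in_tuple t); rewrite t_path -t_last eqxx.
pose h v := ex_minn (reach_ex v).
have closer v : v != r -> exists w, e v w && (h w < h v)%N.
  rewrite /h; case: ex_minnP => k /existsP[[[|w t] /= /eqP size_t]] => [/eqP-> //|].
  move=> /andP[/andP[evw w_path] w_last] _ _; exists w; rewrite evw /=.
  case: ex_minnP => kw _ /(_ (size t)); rewrite -size_t; apply.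
  by apply/existsP; exists (in_tuple t); rewrite w_path w_last.
pose par v := odflt v [pick w | e v w && (h w < h v)%N].
have parP v : v != r -> e v (par v) && (h (par v) < h v)%N.
  move=> /closer[w w_closer]; rewrite /par; case: pickP => [// | none].
  by rewrite none in w_closer.
by exists par; split=> [|v]; [exists h => v | ]; rewrite nonrootE => /parP /andP[].
Qed.

Lemma tree_parent : exists p, parent_edges p /\ rooted p.
Proof.
have [p [p_rooted p_edge]] := tree_descent.
case: e_tree => m_gt0 e_sym e_irr _ e_card.
have edgesE : edge_of p @: nonroot = edge_set.
  apply/eqP; rewrite eqEcard; apply/andP; split.
    apply/subsetP => _ /imsetP[v v_nonroot ->].
    by apply: edge_of_in_edge_set => //; apply: p_edge; rewrite inE in v_nonroot.
  rewrite card_in_imset; last exact: edge_of_inj.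
  have -> : nonroot = [set~ Ordinal m_gt0] by apply/setP => v; rewrite !inE -val_eqE.
  by rewrite cardsC1 card_ord -e_card.
have ordered (u v : 'I_m) : (u < v)%N -> e u v ->
    ((val u != 0%N) && (p u == v)) || ((val v != 0%N) && (p v == u)).
  move=> uv euv; have : (u, v) \in edge_set by rewrite inE /= uv euv.
  rewrite -edgesE => /imsetP[w]; rewrite inE /edge_of => w0.
  by case: ifP => _ [-> ->]; rewrite w0 eqxx ?orbT.
exists p; split=> // u v; apply/idP/idP => [euv | ].
  case: (ltngtP u v) => [uv | vu | /val_inj uv]; first exact: ordered.
    by rewrite orbC; apply: ordered; rewrite // e_sym.
  by rewrite uv e_irr in euv.
by case/orP => /andP[/p_edge + /eqP <-] => //; rewrite e_sym.
Qed.
End Trees.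

Section TreeIsing.
Variables (R : realType) (n : nat) (M : tree_ising R n).

Lemma nv_le : (nv M <= 3 * n - 2)%N.
Proof.
case: (adj_tree M) => _ e_sym e_irr _ e_card.
have := sum_deg e_sym e_irr; rewrite e_card.
suff : ((nv M - n) * 3 <= \sum_u deg (@adj _ _ M) u)%N by lia.
apply: (@leq_trans (\sum_(u : 'I_(nv M)) if (n <= u)%N then 3 else 0)%N); last first.
  by apply: leq_sum => u _; case: ifP => // /internal_ok ->.
rewrite -(big_mkord xpredT (fun u => if (n <= u)%N then 3 else 0)%N).
rewrite (big_cat_nat (n := n) (leq0n n) (nle M)) /= big_nat_cond.
rewrite big1 => [|u /andP[/andP[_ u_lt] _]]; last by rewrite leqNgt u_lt.
by rewrite add0n (eq_big_nat _ _ (F2 := fun=> 3%N)) ?sum_nat_const_nat // => u /andP[->].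
Qed.

Variable p : 'I_(nv M) -> 'I_(nv M).
Hypotheses (p_edges : parent_edges (@adj _ _ M) p) (p_rooted : rooted p).

Definition parent_theta (v : 'I_(nv M)) : R := @theta _ _ M v (p v).

Lemma config_weight_parent s : @config_weight _ _ M s = parent_weight p parent_theta s.
Proof.
rewrite /config_weight pair_big_dep /=.
rewrite (eq_bigl (fun pr => pr \in edge_set (@adj _ _ M))) => [|pr]; last by rewrite inE.
rewrite (edge_set_parent p_rooted p_edges) big_imset /=; last exact: edge_of_inj.
apply: eq_big => [v | v _]; first by rewrite inE.
by rewrite /edge_of /edge_factor /parent_theta; case: ifP => //= _; rewrite theta_sym mulrAC.
Qed.

Lemma leaf_dist_parent : leaf_dist M = parent_leaf_dist p parent_theta (leaf_vertex M).
Proof.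
have m_gt0 : (0 < nv M)%N by case: (adj_tree M).
apply: funext => x; rewrite /leaf_dist /parent_leaf_dist.
under eq_bigr do rewrite config_weight_parent.
by under [X in _ / X]eq_bigr do rewrite config_weight_parent; rewrite sum_parent_weight.
Qed.
End TreeIsing.

Lemma eq_parent_leaf_dist (R : realType) (n m1 m2 : nat) (E : m1 = m2)
    (p1 : 'I_m1 -> 'I_m1) (p2 : 'I_m2 -> 'I_m2) (th1 : 'I_m1 -> R) (th2 : 'I_m2 -> R)
    (lf1 : 'I_n -> 'I_m1) (lf2 : 'I_n -> 'I_m2) :
  (forall v1 v2, val v1 = val v2 -> val (p1 v1) = val (p2 v2)) ->
  (forall v1 v2, val v1 = val v2 -> val v1 != 0%N -> th1 v1 = th2 v2) ->
  (forall i, val (lf1 i) = val (lf2 i)) ->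
  parent_leaf_dist p1 th1 lf1 = parent_leaf_dist p2 th2 lf2.
Proof.
subst m2 => eq_p eq_th eq_lf; apply: funext => x; congr (_ / 2).
apply: eq_big => [s | s _]; first by apply: eq_forallb => i; rewrite (val_inj (eq_lf i)).
by apply: eq_bigr => v v0; rewrite (val_inj (eq_p v v erefl)) (eq_th v v erefl v0).
Qed.

Lemma leaf_dist_eq_of_nv1 (R : realType) (n : nat) (M1 M2 : tree_ising R n) :
  nv M1 = 1%N -> nv M2 = 1%N -> leaf_dist M1 = leaf_dist M2.
Proof.
move=> nv1 nv2.
have [p1 [p1_edges p1_rooted]] := tree_parent (adj_tree M1).
have [p2 [p2_edges p2_rooted]] := tree_parent (adj_tree M2).
have val1 m (v : 'I_m) : m = 1%N -> val v = 0%N by move=> m1; subst m; rewrite (ord1 v).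
rewrite (leaf_dist_parent p1_edges p1_rooted) (leaf_dist_parent p2_edges p2_rooted).
by apply: eq_parent_leaf_dist => [|v1 v2|v1 v2 _|i];
  rewrite ?nv1 ?nv2 ?(val1 _ _ nv1) ?(val1 _ _ nv2).
Qed.

Lemma tv_dist_refl (R : realType) (n : nat) (mu : {ffun 'I_n -> bool} -> R) :
  tv_dist mu mu = 0.
Proof. by rewrite /tv_dist big1 ?mulr0 // => x _; rewrite subrr normr0. Qed.

(** * Quantization *)

Section Grid.
Variables (R : realType) (N : nat).

Definition grid (j : nat) : R := -1 + 2 * j%:R / N%:R.

Definition round (x : R) : 'I_N.+1 := inord (Num.truncn ((x + 1) * N%:R / 2)).

Lemma grid_range (j : 'I_N.+1) : -1 <= grid j <= 1.
Proof.
have : 0 <= (j%:R / N%:R : R) <= 1.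
  case: N j => [|N'] j; first by rewrite mulr0n invr0 mulr0 lexx ler01.
  by rewrite divr_ge0 // ler_pdivrMr ?ltr0n // mul1r ler_nat -ltnS ltn_ord.
move=> /andP[frac_ge0 frac_le1]; rewrite /grid -mulrA; apply/andP; split; lra.
Qed.

Lemma round_spec x : (0 < N)%N -> -1 <= x <= 1 -> `|x - grid (round x)| <= 2 / N%:R.
Proof.
move=> N_gt0 x_range; have N_pos : 0 < N%:R :> R by rewrite ltr0n.
set t := (x + 1) * N%:R / 2.
have t_ge0 : 0 <= t by rewrite /t; apply: divr_ge0 => //; apply: mulr_ge0; lra.
have t_le : t <= N%:R by rewrite /t ler_pdivrMr //; nra.
have /andP[trunc_le trunc_gt] := truncn_itv t_ge0.
rewrite /round inordK ?ltnS ?truncn_le_nat ?ltr_nat; last first.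
  by apply: le_lt_trans t_le _; rewrite ltr_nat.
have -> : x - grid (Num.truncn t) = 2 / N%:R * (t - (Num.truncn t)%:R).
  by rewrite /grid /t; field; rewrite lt0r_neq0.
rewrite normrM ger0_norm ?divr_ge0 ?ler0n // ger0_norm ?subr_ge0 //.
rewrite ler_piMr ?divr_ge0 ?ler0n //; rewrite -natr1 in trunc_gt; lra.
Qed.
End Grid.

Section Quantize.
Variables (R : realType) (n N : nat) (M : tree_ising R n).

Definition quantized_theta (u v : 'I_(nv M)) : R := grid R N (round N (@theta _ _ M u v)).

Lemma quantized_theta_sym u v : quantized_theta u v = quantized_theta v u.
Proof. by rewrite /quantized_theta theta_sym. Qed.

Lemma quantized_theta_range u v : @adj _ _ M u v -> -1 <= quantized_theta u v <= 1.
Proof. by move=> _; apply: grid_range. Qed.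

Definition quantize : tree_ising R n :=
  TreeIsing (nle M) (adj_tree M) (@leaves_ok _ _ M) (@internal_ok _ _ M)
    quantized_theta_sym quantized_theta_range.

Lemma tv_quantize_le : (0 < N)%N ->
  tv_dist (leaf_dist quantize) (leaf_dist M) <= (nv M)%:R / N%:R.
Proof.
move=> N_gt0; have [p [p_edges p_rooted]] := tree_parent (adj_tree M).
have m_gt0 : (0 < nv M)%N by case: (adj_tree M).
rewrite (leaf_dist_parent p_edges p_rooted) (@leaf_dist_parent _ _ quantize p p_edges p_rooted).
apply: le_trans (tv_parent_leaf_dist_le m_gt0 p_rooted _ _ _) _.
- by move=> v _; apply: grid_range.
- by move=> v v0; apply: theta_range; rewrite p_edges v0 eqxx.
apply: (@le_trans _ _ (2^-1 * \sum_(v : 'I_(nv M)) 2 / N%:R)).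
  rewrite ler_wpM2l ?invr_ge0 ?ler0n // [X in X <= _]big_mkcond /=.
  apply: ler_sum => v _; case: ifP => v0; last by rewrite divr_ge0 ?ler0n.
  by rewrite distrC round_spec // theta_range // p_edges v0 eqxx.
have N_neq0 : N%:R != 0 :> R by rewrite pnatr_eq0 -lt0n.
rewrite sumr_const card_ord -[_ *+ nv M]mulr_natl le_eqVlt; apply/orP; left.
by apply/eqP; field.
Qed.
End Quantize.

Section Codes.
Variables (R : realType) (n N : nat).

(* The number of vertices, the parent map and the grid indices of the weights of the parent
   edges; entries at indices beyond the number of vertices are ignored. *)
Definition code := ('I_(3 * n).+1 * {ffun 'I_(3 * n).+1 -> 'I_(3 * n).+1}
  * {ffun 'I_(3 * n).+1 -> 'I_N.+1})%type.

Definition realizes (c : code) (M : tree_ising R n) : Prop :=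
  exists p : 'I_(nv M) -> 'I_(nv M),
    [/\ nv M = c.1.1, parent_edges (@adj _ _ M) p, rooted p,
        forall v, val (p v) = val (c.1.2 (inord v)) &
        forall v, val v != 0%N -> @theta _ _ M v (p v) = grid R N (c.2 (inord v))].

Lemma realizes_leaf_dist c M1 M2 :
  realizes c M1 -> realizes c M2 -> leaf_dist M1 = leaf_dist M2.
Proof.
move=> [p1 [nv1 p1_edges p1_rooted p1_code th1_code]].
move=> [p2 [nv2 p2_edges p2_rooted p2_code th2_code]].
rewrite (leaf_dist_parent p1_edges p1_rooted) (leaf_dist_parent p2_edges p2_rooted).
apply: eq_parent_leaf_dist => [|v1 v2 eq_v|v1 v2 eq_v v0|i] //; first by rewrite nv1 nv2.
  by rewrite p1_code p2_code eq_v.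
by rewrite /parent_theta th1_code // th2_code -?eq_v // eq_v.
Qed.

Lemma realizes_quantize M : exists c, realizes c (quantize N M).
Proof.
have [p [p_edges p_rooted]] := tree_parent (adj_tree M).
have small (v : 'I_(nv M)) : (v < (3 * n).+1)%N by have := nv_le M; have := ltn_ord v; lia.
have val_inord (v : 'I_(nv M)) : val (inord v : 'I_(3 * n).+1) = val v by apply: inordK.
pose parent_code := [ffun v : 'I_(3 * n).+1 =>
  oapp (fun w : 'I_(nv M) => inord (p w) : 'I_(3 * n).+1) ord0 (insub (val v))].
pose theta_code := [ffun v : 'I_(3 * n).+1 =>
  oapp (fun w : 'I_(nv M) => round N (@theta _ _ M w (p w))) ord0 (insub (val v))].
exists (inord (nv M), parent_code, theta_code), p; split=> //= [|v|v _].
- by rewrite inordK //; have := nv_le M; lia.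
- by rewrite /parent_code ffunE val_inord valK /= inordK.
- by rewrite /theta_code ffunE val_inord valK.
Qed.

Variable default : tree_ising R n.

Definition decode (c : code) : tree_ising R n :=
  if pselect (exists M, realizes c M) is left ex then projT1 (cid ex) else default.

Lemma decodeP c M : realizes c M -> realizes c (decode c).
Proof.
rewrite /decode => cM; case: pselect => [ex | []]; last by exists M.
exact: projT2 (cid ex).
Qed.

Lemma decode_cover M : (0 < N)%N ->
  exists c, tv_dist (leaf_dist (decode c)) (leaf_dist M) <= (nv M)%:R / N%:R.
Proof.
move=> N_gt0; have [c cM] := realizes_quantize M; exists c.
by rewrite (realizes_leaf_dist (decodeP cM) cM) tv_quantize_le.
Qed.
End Codes.

Lemma card_code (n N : nat) :
  #|{: code n N}| = ((3 * n).+1 ^ (3 * n).+2 * N.+1 ^ (3 * n).+1)%N.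
Proof. by rewrite !card_prod !card_ffun !card_ord -expnS. Qed.

Lemma ln_card_code_le (R : realType) (n N : nat) (y : R) : (0 < n)%N -> 1 <= y ->
  (3 * n).+1%:R <= y ^+ 3 -> N.+1%:R <= y ^+ 3 ->
  ln (#|{: code n N}|%:R : R) <= 27 * n%:R * ln y.
Proof.
move=> n_gt0 y_ge1 a_le b_le.
have ln_le k : 0 < k -> k <= y ^+ 3 -> ln k <= 3 * ln y.
  move=> k_gt0 k_le; rewrite [3 * _]mulr_natl -lnXn; last lra.
  by rewrite ler_ln ?posrE ?exprn_gt0 //; lra.
have ln_y_ge0 : 0 <= ln y by apply: ln_ge0.
rewrite card_code natrM !natrX lnM ?posrE ?exprn_gt0 ?ltr0Sn // !lnXn ?ltr0Sn //.
rewrite -[ln _ *+ (3 * n).+2]mulr_natr -[ln _ *+ (3 * n).+1]mulr_natr.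
have := ler_wpM2r (ler0n R (3 * n).+2) (ln_le _ (ltr0Sn _ _) a_le).
have := ler_wpM2r (ler0n R (3 * n).+1) (ln_le _ (ltr0Sn _ _) b_le).
have : 0 <= ln y * (n%:R - 1) by rewrite mulr_ge0 // subr_ge0 ler1n.
rewrite -[(3 * n).+2%:R]natr1 -[(3 * n).+1%:R]natr1 natrM; lra.
Qed.

Lemma exists_grid_size (R : realType) (y : R) : 2 <= y ->
  exists N : nat, 3 * y <= N%:R /\ N.+1%:R <= y ^+ 3.
Proof.
move=> y_ge2; exists (Num.truncn (3 * y)).+1.
have /truncn_itv/andP[trunc_le trunc_gt] : 0 <= 3 * y by lra.
have y_sq : 4 <= y ^+ 2 by rewrite expr2; nra.
have y_cube : 4 * y <= y ^+ 3 by rewrite exprSr ler_wpM2r //; lra.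
split; first exact: ltW.
by rewrite -[_.+2%:R]natr1 -[_.+1%:R]natr1; lra.
Qed.

Theorem lemma17 (R : realType) :
  exists C : R, forall (n : nat), (1 <= n)%N ->
  forall eps : R, 0 < eps -> eps < 1 ->
  exists (k : nat) (F : 'I_k -> tree_ising R n),
    ln (k%:R : R) <= C * n%:R * ln (n%:R / eps) /\
    forall M : tree_ising R n, exists i : 'I_k,
      tv_dist (leaf_dist (F i)) (leaf_dist M) <= eps.
Proof.
exists 27 => n n_gt0 eps eps_gt0 eps_lt1.
have n_ge1 : 1 <= n%:R :> R by rewrite ler1n.
set y := n%:R / eps.
have y_ge_n : n%:R <= y by rewrite ler_pdivlMr // ler_piMr ?ler0n ?ltW.
have bound_ge0 : 0 <= 27 * n%:R * ln y by rewrite !mulr_ge0 ?ler0n // ln_ge0 //; lra.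
have [[M0 _] | no_model] := pselect (exists M : tree_ising R n, True); last first.
  (* Without any model the empty family works, as [ln 0 = 0]. *)
  have F : 'I_0 -> tree_ising R n by case.
  by exists 0%N, F; rewrite ln0 //; split => // M; case: no_model; exists M.
have [n1 | n_neq1] := eqVneq n 1%N.
  (* The bound tends to 0 as [eps -> 1], forcing [k = 1]: every model is a single vertex. *)
  have nv1 (M : tree_ising R n) : nv M = 1%N by have := nv_le M; have := nle M; lia.
  exists 1%N, (fun=> M0); rewrite ln1; split => // M; exists ord0.
  by rewrite (leaf_dist_eq_of_nv1 (nv1 M0) (nv1 M)) tv_dist_refl ltW.
have n_ge2 : 2 <= n%:R :> R by rewrite ler_nat; lia.
have y_ge2 : 2 <= y by lra.
have [N [N_ge N_small]] := exists_grid_size y_ge2.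
exists #|{: code n N}|, (fun i => decode M0 (enum_val i)); split.
  apply: (@ln_card_code_le R n N y) => //; first lra.
  by apply: le_trans N_small; rewrite -[(3 * n).+1%:R]natr1 -[N.+1%:R]natr1 natrM; lra.
have N_gt0 : (0 < N)%N by rewrite -(ltr_nat R); lra.
move=> M; have [c cM] := @decode_cover R n N M0 M N_gt0.
exists (enum_rank c); rewrite enum_rankK; apply: le_trans cM _.
have : (nv M)%:R <= 3 * n%:R :> R by rewrite -natrM ler_nat (leq_trans (nv_le M)) ?leq_subr.
have eps_y : eps * y = n%:R by rewrite /y mulrC divfK ?gt_eqF.
have := ler_wpM2l (ltW eps_gt0) N_ge.
by rewrite ler_pdivrMr ?ltr0n //; lra.
Qed.
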